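(* Let $f:G\to H$ be a surjective group homomorphism. If there exists a surjective homomorphism $\varphi:H\to K$ onto a finite noncyclic group $K$ such that $f$ admits a local section on $\varphi^{-1}(\langle b\rangle)$ for every $b\in K$ with $b\neq 1$, then $\mathrm{sec}(f)<\infty$. Conversely, if $H$ is abelian and $\mathrm{sec}(f)<\infty$, then such a $K$ and $\varphi$ exist.
   Context: For a homomorphism $f:G\to H$ and a subgroup $L\le H$, a local section of $f$ on $L$ is a homomorphism $s:L\to G$ with $f\circ s=\mathrm{incl}_L$ (the inclusion $L\hookrightarrow H$). The sectional number $\mathrm{sec}(f)$ is the least positive integer $m$ such that there exist proper subgroups $H_1,\ldots,H_m$ of $H$ with $H=H_1\cup\cdots\cup H_m$ and such that $f$ admits a local section on each $H_i$; $\mathrm{sec}(f)=\infty$ if no such $m$ exists. *)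

From Stdlib Require Import List.

Record group := Group {
  carrier :> Type;
  gmul : carrier -> carrier -> carrier;
  gone : carrier;
  ginv : carrier -> carrier;
  gmulA : forall x y z, gmul x (gmul y z) = gmul (gmul x y) z;
  gmul1 : forall x, gmul gone x = x;
  gmulV : forall x, gmul (ginv x) x = gone
}.

Arguments gmul {g}.
Arguments gone {g}.
Arguments ginv {g}.

Definition is_hom {G H : group} (f : G -> H) : Prop :=
  forall x y : G, f (gmul x y) = gmul (f x) (f y).

Definition surjective {A B : Type} (f : A -> B) : Prop :=
  forall y, exists x, f x = y.

Definition is_subgroup {G : group} (S : G -> Prop) : Prop :=
  S gone /\ (forall x y, S x -> S y -> S (gmul x y)) /\
  (forall x, S x -> S (ginv x)).

Definition proper {G : group} (S : G -> Prop) : Prop := exists x, ~ S x.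

Definition cyc {G : group} (b : G) : G -> Prop :=
  fun x => forall S : G -> Prop, is_subgroup S -> S b -> S x.

Definition finite_group (K : group) : Prop :=
  exists l : list K, forall x, In x l.

Definition cyclic_group (K : group) : Prop :=
  exists g : K, forall x, cyc g x.

Definition abelian (G : group) : Prop :=
  forall x y : G, gmul x y = gmul y x.

(* local section of f on the subgroup L of H: a homomorphism s : L -> G
   with f o s = incl_L (s is represented by a function H -> G whose
   restriction to L is the section; values off L are irrelevant). *)
Definition local_section {G H : group} (f : G -> H) (L : H -> Prop) : Prop :=
  exists s : H -> G,
    (forall x y, L x -> L y -> s (gmul x y) = gmul (s x) (s y)) /\
    (forall x, L x -> f (s x) = x).

(* sec(f) < oo : H is a finite union of m >= 1 proper subgroups, on each of
   which f admits a local section *)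
Definition sec_finite {G H : group} (f : G -> H) : Prop :=
  exists l : list (H -> Prop),
    l <> nil /\
    (forall S, In S l -> is_subgroup S /\ proper S /\ local_section f S) /\
    (forall x : H, exists S, In S l /\ S x).

Definition good_quotient {G H : group} (f : G -> H) : Prop :=
  exists (K : group) (phi : H -> K),
    is_hom phi /\ surjective phi /\ finite_group K /\ ~ cyclic_group K /\
    (forall b : K, b <> gone -> local_section f (fun h => cyc b (phi h))).

(* If [phi : H -> K] is as in the theorem, the preimages of the cyclic
   subgroups [<b>], [b <> 1], are proper since [K] is not cyclic, cover [H]
   since [K] is finite and nontrivial, and carry local sections of [f].

   Conversely, let [H] be a finite union of proper subgroups carrying local
   sections.  By B. H. Neumann's lemma the members of finite index already
   cover [H]; the normal core [N] of their intersection has finite index, so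
   [K = H / N] is finite.  Each [h] lies in a finite-index member [S], which
   contains [N] and hence the whole preimage of [<hN>]: the section on [S]
   restricts to it, and [K] is not cyclic because [S] is proper. *)

From Stdlib Require Import List Classical ClassicalEpsilon.
From Stdlib Require Import FunctionalExtensionality PropExtensionality ProofIrrelevance.
Import ListNotations.

Local Notation "x ** y" := (gmul x y) (at level 40, left associativity).

Section GroupFacts.
Variable G : group.
Implicit Types x y : G.

Lemma gmulgV x : x ** ginv x = gone.
Proof.
  rewrite <- (gmul1 _ (x ** ginv x)), <- (gmulV _ (ginv x)) at 1.
  rewrite <- gmulA, (gmulA _ (ginv x) x (ginv x)), gmulV, gmul1.
  apply gmulV.
Qed.

Lemma gmulg1 x : x ** gone = x.
Proof. rewrite <- (gmulV _ x), gmulA, gmulgV, gmul1. reflexivity. Qed.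

Lemma ginv_uniq x y : x ** y = gone -> x = ginv y.
Proof.
  intro E. rewrite <- (gmulg1 x), <- (gmulgV y), gmulA, E, gmul1. reflexivity.
Qed.

Lemma ginvK x : ginv (ginv x) = x.
Proof. symmetry. apply ginv_uniq, gmulgV. Qed.

Lemma ginvM x y : ginv (x ** y) = ginv y ** ginv x.
Proof.
  symmetry. apply ginv_uniq.
  rewrite <- gmulA, (gmulA _ (ginv x)), gmulV, gmul1, gmulV. reflexivity.
Qed.

Lemma ginv1 : ginv (@gone G) = gone.
Proof. symmetry. apply ginv_uniq, gmul1. Qed.

Lemma gmulgK x y : x ** y ** ginv y = x.
Proof. rewrite <- gmulA, gmulgV, gmulg1. reflexivity. Qed.

Lemma gmulgKV x y : x ** ginv y ** y = x.
Proof. rewrite <- gmulA, gmulV, gmulg1. reflexivity. Qed.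

End GroupFacts.

Ltac gsimpl :=
  repeat progress rewrite ?ginvM, ?ginvK, ?ginv1, ?gmulA, ?gmulgV, ?gmulV,
    ?gmul1, ?gmulg1, ?gmulgK, ?gmulgKV;
  try reflexivity.

Definition coset {G : group} (a : G) (S : G -> Prop) : G -> Prop :=
  fun y => S (ginv a ** y).

Definition bigcap {G : group} (Q : (G -> Prop) -> Prop) : G -> Prop :=
  fun y => forall S, Q S -> S y.

Section Subgroups.
Variables (G : group) (S : G -> Prop).
Hypothesis S_sub : is_subgroup S.

Lemma subgroup1 : S gone.
Proof. apply S_sub. Qed.

Lemma subgroupM x y : S x -> S y -> S (x ** y).
Proof. apply S_sub. Qed.

Lemma subgroupV x : S x -> S (ginv x).
Proof. apply S_sub. Qed.

Lemma coset_rebase a b c : coset a S b -> coset a S c -> coset b S c.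
Proof.
  unfold coset; intros Hb Hc.
  replace (ginv b ** c) with (ginv (ginv a ** b) ** (ginv a ** c)) by gsimpl.
  apply subgroupM; [apply subgroupV|]; assumption.
Qed.

Lemma coset_trans a b c : coset a S b -> coset b S c -> coset a S c.
Proof.
  unfold coset; intros Hb Hc.
  replace (ginv a ** c) with ((ginv a ** b) ** (ginv b ** c)) by gsimpl.
  apply subgroupM; assumption.
Qed.

End Subgroups.

Lemma is_subgroup_bigcap {G : group} (Q : (G -> Prop) -> Prop) :
  (forall S, Q S -> is_subgroup S) -> is_subgroup (bigcap Q).
Proof.
  intro HQ; split; [|split]; unfold bigcap.
  - intros S HS. apply subgroup1; auto.
  - intros x y Hx Hy S HS. apply (subgroupM _ S); [auto | apply Hx | apply Hy]; auto.
  - intros x Hx S HS. apply (subgroupV _ S); [auto | apply Hx]; auto.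
Qed.

Lemma is_subgroup_cyc {G : group} (b : G) : is_subgroup (cyc b).
Proof.
  split; [|split]; unfold cyc.
  - intros S HS _. apply subgroup1; auto.
  - intros x y Hx Hy S HS Hb. apply (subgroupM _ S); [auto | apply Hx | apply Hy]; auto.
  - intros x Hx S HS Hb. apply (subgroupV _ S); [auto | apply Hx]; auto.
Qed.

Lemma cyc_id {G : group} (b : G) : cyc b b.
Proof. intros S _ Hb. exact Hb. Qed.

Section Homomorphisms.
Variables (H K : group) (phi : H -> K).
Hypothesis phi_hom : is_hom phi.

Lemma hom1 : phi gone = gone.
Proof.
  assert (E : phi gone ** phi gone = phi gone) by (rewrite <- phi_hom, gmul1; reflexivity).
  rewrite <- (gmulgK _ (phi gone) (phi gone)) at 1. rewrite E. apply gmulgV.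
Qed.


Lemma homV x : phi (ginv x) = ginv (phi x).
Proof. apply ginv_uniq. rewrite <- phi_hom, gmulV. apply hom1. Qed.

Lemma is_subgroup_preim (S : K -> Prop) : is_subgroup S -> is_subgroup (fun h => S (phi h)).
Proof.
  intro HS; split; [|split].
  - rewrite hom1. apply subgroup1; auto.
  - intros x y Hx Hy. rewrite phi_hom. apply subgroupM; auto.
  - intros x Hx. rewrite homV. apply subgroupV; auto.
Qed.

Lemma is_subgroup_image (S : H -> Prop) :
  is_subgroup S -> is_subgroup (fun k => exists h, phi h = k /\ S h).
Proof.
  intro HS; split; [|split].
  - exists gone. split; [apply hom1 | apply subgroup1; auto].
  - intros k1 k2 [x [<- Hx]] [y [<- Hy]].
    exists (x ** y). split; [apply phi_hom | apply subgroupM; auto].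
  - intros k [x [<- Hx]].
    exists (ginv x). split; [apply homV | apply subgroupV; auto].
Qed.

(* The image of [S] is a subgroup containing [phi h], hence [phi y]; as [S]
   contains the kernel, it is a union of fibres of [phi]. *)
Lemma cyc_preim_sub (S : H -> Prop) h y :
  is_subgroup S -> (forall z, phi z = gone -> S z) -> S h ->
  cyc (phi h) (phi y) -> S y.
Proof.
  intros HS Hker Hh Hy.
  destruct (Hy _ (is_subgroup_image S HS) (ex_intro _ h (conj eq_refl Hh)))
    as [y' [Ey Hy']].
  assert (Hfibre : S (ginv y' ** y)).
  { apply Hker. rewrite phi_hom, homV, Ey. apply gmulV. }
  replace y with (y' ** (ginv y' ** y)) by gsimpl.
  apply subgroupM; auto.
Qed.

End Homomorphisms.

Section Normality.
Variable G : group.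

Definition normal (N : G -> Prop) : Prop :=
  forall g n, N n -> N (ginv g ** n ** g).

Definition conj_set (D : G -> Prop) (g : G) : G -> Prop :=
  fun y => D (ginv g ** y ** g).

Definition core (D : G -> Prop) : G -> Prop := fun y => forall g, conj_set D g y.

Variable D : G -> Prop.
Hypothesis D_sub : is_subgroup D.

Lemma is_subgroup_conj g : is_subgroup (conj_set D g).
Proof.
  unfold conj_set; split; [|split].
  - rewrite gmulg1, gmulV. apply subgroup1; auto.
  - intros x y Hx Hy.
    replace (ginv g ** (x ** y) ** g) with ((ginv g ** x ** g) ** (ginv g ** y ** g)) by gsimpl.
    apply subgroupM; auto.
  - intros x Hx.
    replace (ginv g ** ginv x ** g) with (ginv (ginv g ** x ** g)) by gsimpl.
    apply subgroupV; auto.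
Qed.

Lemma is_subgroup_core : is_subgroup (core D).
Proof.
  split; [|split]; unfold core.
  - intro g. apply subgroup1, is_subgroup_conj.
  - intros x y Hx Hy g. apply subgroupM; auto using is_subgroup_conj.
  - intros x Hx g. apply subgroupV; auto using is_subgroup_conj.
Qed.

Lemma normal_core : normal (core D).
Proof.
  intros h n Hn g. unfold conj_set.
  replace (ginv g ** (ginv h ** n ** h) ** g) with (ginv (h ** g) ** n ** (h ** g)) by gsimpl.
  apply Hn.
Qed.

Lemma core_sub y : core D y -> D y.
Proof.
  intro Hy. specialize (Hy gone). unfold conj_set in Hy.
  rewrite ginv1, gmul1, gmulg1 in Hy. exact Hy.
Qed.

End Normality.

Lemma list_choice {A B : Type} (R : A -> B -> Prop) (l : list A) :
  (forall a, In a l -> exists b, R a b) ->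
  exists lb : list B, forall a, In a l -> exists b, In b lb /\ R a b.
Proof.
  induction l as [|a l IH]; intro Hl.
  - exists []. intros a [].
  - destruct (Hl a (or_introl eq_refl)) as [b Hb].
    destruct IH as [lb Hlb]; [intros a' Ha'; apply Hl; right; exact Ha'|].
    exists (b :: lb). intros a' [<-|Ha'].
    + exists b. split; [left|]; auto.
    + destruct (Hlb a' Ha') as [b' [Hb' HR]]. exists b'. split; [right|]; auto.
Qed.

Section FiniteIndex.
Variable H : group.

Definition fin_index (S : H -> Prop) : Prop :=
  exists reps : list H, forall x, exists r, In r reps /\ coset r S x.

Lemma fin_index_mono (A B : H -> Prop) :
  (forall y, A y -> B y) -> fin_index A -> fin_index B.
Proof.
  intros AB [reps Hreps]. exists reps. intro x.
  destruct (Hreps x) as [r [Hr Hx]]. exists r. split; [|apply AB]; assumption.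
Qed.

(* One representative of each nonempty intersection [rA :&: sB], with [r] and
   [s] ranging over representatives of [A] and [B]. *)
Lemma fin_index_inter (A B : H -> Prop) : is_subgroup A -> is_subgroup B ->
  fin_index A -> fin_index B -> fin_index (fun y => A y /\ B y).
Proof.
  intros HA HB [ra Hra] [rb Hrb].
  pose (meet := fun rs : H * H => fun t => coset (fst rs) A t /\ coset (snd rs) B t).
  destruct (list_choice (fun rs t => (exists t', meet rs t') -> meet rs t) (list_prod ra rb))
    as [reps Hreps].
  { intros rs _. destruct (classic (exists t, meet rs t)) as [[t Ht]|Hnone].
    - exists t. auto.
    - exists gone. intro Hsome. contradiction. }
  exists reps. intro x.
  destruct (Hra x) as [r [Hr HxA]], (Hrb x) as [s [Hs HxB]].
  destruct (Hreps (r, s)) as [t [Ht Hmeet]]; [apply in_prod; assumption|].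
  destruct Hmeet as [HtA HtB]; [exists x; split; assumption|].
  exists t. split; [exact Ht|].
  split; [apply (coset_rebase _ A) with r | apply (coset_rebase _ B) with s]; assumption.
Qed.

Lemma fin_index_bigcap (l : list (H -> Prop)) (P : (H -> Prop) -> Prop) :
  (forall S, In S l -> P S -> is_subgroup S /\ fin_index S) ->
  fin_index (bigcap (fun S => In S l /\ P S)).
Proof.
  induction l as [|S l IH]; intro Hl.
  - exists [gone]. intro x. exists gone. split; [left; reflexivity|].
    intros S [[] _].
  - assert (IH' : fin_index (bigcap (fun S => In S l /\ P S))).
    { apply IH. intros S' HS'. apply Hl. right. exact HS'. }
    assert (Hcons : forall y, bigcap (fun S => In S l /\ P S) y -> (P S -> S y) ->
                    bigcap (fun S' => In S' (S :: l) /\ P S') y).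
    { intros y Hy HSy S' [[<-|HS'] HP]; [auto | apply Hy; auto]. }
    destruct (classic (P S)) as [HP|HnP].
    + destruct (Hl S (or_introl eq_refl) HP) as [HS HSf].
      apply fin_index_mono with (2 := fin_index_inter _ _ HS
        (is_subgroup_bigcap _ (fun S' HS' => proj1 (Hl S' (or_intror (proj1 HS')) (proj2 HS'))))
        HSf IH').
      intros y [HSy Hy]. auto.
    + apply fin_index_mono with (2 := IH'). intros y Hy. apply Hcons; tauto.
Qed.

Lemma fin_index_conj (D : H -> Prop) g : fin_index D -> fin_index (conj_set H D g).
Proof.
  intros [reps Hreps]. exists (map (fun s => g ** s ** ginv g) reps). intro x.
  destruct (Hreps (ginv g ** x ** g)) as [s [Hs Hx]].
  exists (g ** s ** ginv g). split; [apply (in_map (fun s => g ** s ** ginv g)); exact Hs|].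
  unfold coset, conj_set in *.
  replace (ginv g ** (ginv (g ** s ** ginv g) ** x) ** g)
    with (ginv s ** (ginv g ** x ** g)) by gsimpl.
  exact Hx.
Qed.

(* The core is the intersection of the conjugates of [D] by a set of coset
   representatives, a finite intersection of subgroups of finite index. *)
Lemma fin_index_core (D : H -> Prop) :
  is_subgroup D -> fin_index D -> fin_index (core H D).
Proof.
  intros HD HDf. destruct HDf as [reps Hreps].
  apply fin_index_mono with (bigcap (fun S => In S (map (conj_set H D) reps) /\ True)).
  - intros y Hy g. destruct (Hreps g) as [r [Hr Hg]].
    assert (Hyr : conj_set H D r y) by (apply Hy; split; [apply in_map|]; auto).
    unfold conj_set, coset in *.
    replace (ginv g ** y ** g)
      with (ginv (ginv r ** g) ** (ginv r ** y ** r) ** (ginv r ** g)) by gsimpl.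
    apply (subgroupM _ D); [auto | |auto].
    apply (subgroupM _ D); [auto | apply subgroupV |]; auto.
  - apply fin_index_bigcap. intros S HS _. apply in_map_iff in HS.
    destruct HS as [r [<- _]]. split; [apply is_subgroup_conj; auto|].
    apply fin_index_conj. exists reps. exact Hreps.
Qed.

End FiniteIndex.

Definition asbool (P : Prop) : bool :=
  if excluded_middle_informative P then true else false.

Lemma asboolT (P : Prop) : asbool P = true <-> P.
Proof. unfold asbool. destruct (excluded_middle_informative P); split; auto; discriminate. Qed.

Section CosetCovers.
Variable H : group.

Definition coset_cover (E : list (H * (H -> Prop))) : Prop :=
  forall x, exists e, In e E /\ coset (fst e) (snd e) x.

Definition translate (g : H) (e : H * (H -> Prop)) : H * (H -> Prop) :=
  (g ** fst e, snd e).

Definition select (P : (H -> Prop) -> Prop) (E : list (H * (H -> Prop))) :=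
  filter (fun e => asbool (P (snd e))) E.

Lemma in_select P E e : In e (select P E) <-> In e E /\ P (snd e).
Proof. unfold select. rewrite filter_In, asboolT. reflexivity. Qed.

Lemma coset_translate g e y :
  coset (fst (translate g e)) (snd (translate g e)) y <-> coset (fst e) (snd e) (ginv g ** y).
Proof.
  unfold coset, translate; simpl.
  replace (ginv (g ** fst e) ** y) with (ginv (fst e) ** (ginv g ** y)) by gsimpl.
  reflexivity.
Qed.

Lemma infinite_index_missed_coset (L : H -> Prop) (E : list (H * (H -> Prop))) :
  ~ fin_index H L -> exists x, forall e, In e E -> snd e = L -> ~ coset (fst e) L x.
Proof.
  intro HL. apply NNPP. intro Hnone. apply HL.
  exists (map fst (select (fun S => S = L) E)). intro y.
  apply NNPP. intro Hy. apply Hnone. exists y. intros e He HeL Hye. apply Hy.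
  exists (fst e). split; [|exact Hye].
  apply in_map, in_select. auto.
Qed.

(* If [xL] meets no coset of [L] in [E], every coset [aL] of [E] is covered by
   the translates by [a x^-1] of the cosets of the other subgroups. *)
Lemma coset_cover_avoiding (E : list (H * (H -> Prop))) (L : H -> Prop) x :
  (forall e, In e E -> is_subgroup (snd e)) -> coset_cover E ->
  (forall e, In e E -> snd e = L -> ~ coset (fst e) L x) ->
  coset_cover (select (fun S => S <> L) E ++
               flat_map (fun e => map (translate (fst e ** ginv x))
                                      (select (fun S => S <> L) E)) E).
Proof.
  intros Hsub Hcov Hx y. destruct (Hcov y) as [e [He Hy]].
  destruct (classic (snd e = L)) as [HeL|HeL].
  - set (z := x ** (ginv (fst e) ** y)).
    destruct (Hcov z) as [e' [He' Hz]].
    destruct (classic (snd e' = L)) as [He'L|He'L].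
    + exfalso. apply (Hx e' He' He'L).
      assert (HL : is_subgroup L) by (rewrite <- HeL; apply Hsub; exact He).
      rewrite He'L in Hz. rewrite HeL in Hy. unfold coset in *.
      replace (ginv (fst e') ** x) with ((ginv (fst e') ** z) ** ginv (ginv (fst e) ** y))
        by (unfold z; gsimpl).
      apply subgroupM; [| | apply subgroupV]; auto.
    + exists (translate (fst e ** ginv x) e'). split.
      * apply in_or_app. right. apply in_flat_map. exists e. split; [exact He|].
        apply in_map, in_select. auto.
      * apply coset_translate.
        replace (ginv (fst e ** ginv x) ** y) with z by (unfold z; gsimpl). exact Hz.
  - exists e. split; [|exact Hy]. apply in_or_app. left. apply in_select. auto.
Qed.

(* B. H. Neumann's lemma; the induction eliminates the subgroups of [Ls] one
   at a time. *)
Lemma not_coset_cover_infinite_index (Ls : list (H -> Prop)) (E : list (H * (H -> Prop))) :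
  (forall e, In e E -> is_subgroup (snd e) /\ ~ fin_index H (snd e) /\ In (snd e) Ls) ->
  ~ coset_cover E.
Proof.
  revert E; induction Ls as [|L Ls IH]; intros E HE Hcov.
  - destruct (Hcov gone) as [e [He _]]. destruct (HE e He) as [_ [_ []]].
  - destruct (classic (fin_index H L)) as [HLf|HLf].
    + apply (IH E); [|exact Hcov]. intros e He.
      destruct (HE e He) as [Hs [Hf [HeL|Hin]]]; [|auto].
      rewrite <- HeL in Hf. contradiction.
    + destruct (infinite_index_missed_coset L E HLf) as [x Hx].
      eapply IH; [|apply (coset_cover_avoiding E L x); [apply HE | exact Hcov | exact Hx]].
      intros e He. apply in_app_or in He. destruct He as [He|He].
      * apply in_select in He. destruct He as [He HeL].
        destruct (HE e He) as [Hs [Hf [HLe|Hin]]]; [congruence | auto].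
      * apply in_flat_map in He. destruct He as [e0 [_ He]].
        apply in_map_iff in He. destruct He as [e' [<- He']].
        apply in_select in He'. destruct He' as [He' He'L]. simpl.
        destruct (HE e' He') as [Hs [Hf [HLe|Hin]]]; [congruence | auto].
Qed.

(* If [y0] were outside all finite-index cosets, so would be [y0 D], with [D]
   the intersection of the finite-index subgroups; translating [y0 D] around
   would cover [H] by cosets of infinite index. *)
Lemma fin_index_cosets_cover (E : list (H * (H -> Prop))) :
  (forall e, In e E -> is_subgroup (snd e)) -> coset_cover E ->
  forall y, exists e, In e E /\ fin_index H (snd e) /\ coset (fst e) (snd e) y.
Proof.
  intros Hsub Hcov y0. apply NNPP. intro Hy0.
  set (D := bigcap (fun S => In S (map snd E) /\ fin_index H S)).
  assert (HD : fin_index H D).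
  { apply fin_index_bigcap. intros S HS HSf. apply in_map_iff in HS.
    destruct HS as [e [<- He]]. auto. }
  destruct HD as [reps Hreps].
  apply (not_coset_cover_infinite_index (map snd E)
           (flat_map (fun r => map (translate (r ** ginv y0))
                                   (select (fun S => ~ fin_index H S) E)) reps)).
  - intros e He. apply in_flat_map in He. destruct He as [r [_ He]].
    apply in_map_iff in He. destruct He as [e' [<- He']].
    apply in_select in He'. destruct He' as [He' Hinf]. simpl.
    split; [auto | split; [exact Hinf | apply in_map; exact He']].
  - intro y. destruct (Hreps y) as [r [Hr Hy]].
    set (z := y0 ** (ginv r ** y)).
    destruct (Hcov z) as [e [He Hz]].
    destruct (classic (fin_index H (snd e))) as [Hf|Hinf].
    + exfalso. apply Hy0. exists e. split; [exact He|]. split; [exact Hf|].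
      assert (HDe : snd e (ginv r ** y)) by (apply Hy; split; [apply in_map|]; auto).
      unfold coset in *.
      replace (ginv (fst e) ** y0) with ((ginv (fst e) ** z) ** ginv (ginv r ** y))
        by (unfold z; gsimpl).
      apply subgroupM; [| | apply subgroupV]; auto.
    + exists (translate (r ** ginv y0) e). split.
      * apply in_flat_map. exists r. split; [exact Hr|].
        apply in_map, in_select. auto.
      * apply coset_translate.
        replace (ginv (r ** ginv y0) ** y) with z by (unfold z; gsimpl). exact Hz.
Qed.

Lemma fin_index_subgroups_cover (l : list (H -> Prop)) :
  (forall S, In S l -> is_subgroup S) -> (forall x, exists S, In S l /\ S x) ->
  forall x, exists S, In S l /\ fin_index H S /\ S x.
Proof.
  intros Hsub Hcov x.
  destruct (fin_index_cosets_cover (map (pair gone) l)) with (y := x)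
    as [e [He [Hf Hx]]].
  - intros e He. apply in_map_iff in He. destruct He as [S [<- HS]]. auto.
  - intro y. destruct (Hcov y) as [S [HS Hy]]. exists (gone, S).
    split; [apply in_map; exact HS|]. unfold coset; simpl. rewrite ginv1, gmul1. exact Hy.
  - apply in_map_iff in He. destruct He as [S [<- HS]].
    exists S. unfold coset in Hx; simpl in *. rewrite ginv1, gmul1 in Hx. auto.
Qed.

End CosetCovers.

Section Quotient.
Variables (H : group) (N : H -> Prop).
Hypotheses (N_sub : is_subgroup N) (N_normal : normal H N).

(* [H / N] is realised as the set of left cosets of [N], with the operations
   computed on chosen representatives. *)
Definition quot_carrier : Type := {P : H -> Prop | exists h, P = coset h N}.

Definition quot_map (h : H) : quot_carrier := exist _ (coset h N) (ex_intro _ h eq_refl).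

Definition quot_rep (p : quot_carrier) : H :=
  epsilon (inhabits gone) (fun h => proj1_sig p = coset h N).

Lemma quot_repK p : quot_map (quot_rep p) = p.
Proof.
  destruct p as [P HP]. unfold quot_map. apply subset_eq_compat. symmetry.
  exact (epsilon_spec (inhabits gone) (fun h => P = coset h N) HP).
Qed.

Lemma quot_map_surj : surjective quot_map.
Proof. intro p. exists (quot_rep p). apply quot_repK. Qed.

Lemma quot_map_eq x y : quot_map x = quot_map y <-> coset x N y.
Proof.
  split.
  - intro E. apply (f_equal (@proj1_sig _ _)) in E. simpl in E.
    rewrite E. unfold coset. rewrite gmulV. apply subgroup1; auto.
  - intro Hxy. unfold quot_map. apply subset_eq_compat.
    apply functional_extensionality. intro z. apply propositional_extensionality.
    split; intro Hz.
    + apply (coset_rebase _ N) with x; auto.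
    + apply (coset_trans _ N) with y; auto.
Qed.

Definition quot_mul (p q : quot_carrier) : quot_carrier := quot_map (quot_rep p ** quot_rep q).
Definition quot_one : quot_carrier := quot_map gone.
Definition quot_inv (p : quot_carrier) : quot_carrier := quot_map (ginv (quot_rep p)).

Lemma quot_map_mul x y : quot_mul (quot_map x) (quot_map y) = quot_map (x ** y).
Proof.
  unfold quot_mul.
  pose proof (quot_repK (quot_map x)) as Ex. pose proof (quot_repK (quot_map y)) as Ey.
  set (x' := quot_rep (quot_map x)) in *. set (y' := quot_rep (quot_map y)) in *.
  apply quot_map_eq in Ex, Ey. apply quot_map_eq. unfold coset in *.
  replace (ginv (x' ** y') ** (x ** y))
    with ((ginv y' ** (ginv x' ** x) ** y') ** (ginv y' ** y)) by gsimpl.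
  apply subgroupM; [| apply N_normal |]; auto.
Qed.

Lemma quot_map_inv x : quot_inv (quot_map x) = quot_map (ginv x).
Proof.
  unfold quot_inv. pose proof (quot_repK (quot_map x)) as Ex.
  set (x' := quot_rep (quot_map x)) in *.
  apply quot_map_eq in Ex. apply quot_map_eq. unfold coset in *.
  replace (ginv (ginv x') ** ginv x) with (ginv (ginv x') ** ginv (ginv x' ** x) ** ginv x')
    by gsimpl.
  apply N_normal, subgroupV; auto.
Qed.

Lemma quot_mulA p q r : quot_mul p (quot_mul q r) = quot_mul (quot_mul p q) r.
Proof.
  destruct (quot_map_surj p) as [a <-], (quot_map_surj q) as [b <-],
    (quot_map_surj r) as [c <-].
  rewrite !quot_map_mul, gmulA. reflexivity.
Qed.

Lemma quot_mul1 p : quot_mul quot_one p = p.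
Proof.
  destruct (quot_map_surj p) as [a <-]. unfold quot_one. rewrite quot_map_mul, gmul1. reflexivity.
Qed.

Lemma quot_mulV p : quot_mul (quot_inv p) p = quot_one.
Proof.
  destruct (quot_map_surj p) as [a <-]. rewrite quot_map_inv, quot_map_mul, gmulV. reflexivity.
Qed.

Definition quot : group :=
  Group quot_carrier quot_mul quot_one quot_inv quot_mulA quot_mul1 quot_mulV.

Lemma quot_map_hom : @is_hom H quot quot_map.
Proof. intros x y. symmetry. apply quot_map_mul. Qed.

Lemma quot_map_ker y : @quot_map y = @gone quot -> N y.
Proof.
  intro Hy. symmetry in Hy. apply quot_map_eq in Hy. unfold coset in Hy.
  rewrite ginv1, gmul1 in Hy. exact Hy.
Qed.

Lemma quot_finite : fin_index H N -> finite_group quot.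
Proof.
  intros [reps Hreps]. exists (map quot_map reps). intro p.
  destruct (quot_map_surj p) as [x <-]. destruct (Hreps x) as [r [Hr Hx]].
  apply in_map_iff. exists r. split; [apply quot_map_eq |]; assumption.
Qed.

End Quotient.

Lemma local_section_sub {G H : group} (f : G -> H) (L L' : H -> Prop) :
  (forall x, L' x -> L x) -> local_section f L -> local_section f L'.
Proof.
  intros HL [s [Hs_mul Hs_sec]]. exists s. split; auto.
Qed.

Lemma noncyclic_nontrivial (K : group) : ~ cyclic_group K -> exists b : K, b <> gone.
Proof.
  intro Hnc. apply NNPP. intro Htriv. apply Hnc. exists gone. intro x.
  replace x with (@gone K) by (apply NNPP; intro Hx; apply Htriv; exists x; auto).
  apply cyc_id.
Qed.

Lemma proper_preim_cyc {H K : group} (phi : H -> K) (b : K) :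
  surjective phi -> ~ cyclic_group K -> proper (fun h => cyc b (phi h)).
Proof.
  intros Hsurj Hnc. apply NNPP. intro Hall. apply Hnc. exists b. intro k.
  destruct (Hsurj k) as [h <-]. apply NNPP. intro Hh. apply Hall. exists h. exact Hh.
Qed.

Lemma good_quotient_sec_finite {G H : group} (f : G -> H) :
  good_quotient f -> sec_finite f.
Proof.
  intros [K [phi [Hhom [Hsurj [[lK HlK] [Hnc Hsec]]]]]].
  destruct (noncyclic_nontrivial K Hnc) as [b0 Hb0].
  pose (nz := fun b : K => if excluded_middle_informative (b = gone) then b0 else b).
  assert (Hnz : forall b, nz b <> gone).
  { intro b. unfold nz. destruct (excluded_middle_informative (b = gone)); auto. }
  exists (map (fun b h => cyc (nz b) (phi h)) lK). split; [|split].
  - destruct lK; [destruct (HlK gone) | discriminate].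
  - intros S HS. apply in_map_iff in HS. destruct HS as [b [<- _]].
    split; [|split].
    + apply is_subgroup_preim, is_subgroup_cyc. exact Hhom.
    + apply proper_preim_cyc; assumption.
    + apply Hsec, Hnz.
  - intro x. exists (fun h => cyc (nz (phi x)) (phi h)). split.
    + apply in_map_iff. exists (phi x). auto.
    + unfold nz. destruct (excluded_middle_informative (phi x = gone)) as [Hx|Hx].
      * rewrite Hx. apply subgroup1, is_subgroup_cyc.
      * apply cyc_id.
Qed.

Lemma sec_finite_good_quotient {G H : group} (f : G -> H) :
  sec_finite f -> good_quotient f.
Proof.
  intros [l [_ [Hl Hcov]]].
  assert (Hsub : forall S, In S l -> is_subgroup S) by (intros S HS; apply Hl, HS).
  pose proof (fin_index_subgroups_cover H l Hsub Hcov) as Hfin.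
  set (D := bigcap (fun S => In S l /\ fin_index H S)).
  assert (HD : is_subgroup D) by (apply is_subgroup_bigcap; intros S [HS _]; auto).
  assert (HDf : fin_index H D) by (apply fin_index_bigcap; auto).
  set (N := core H D).
  pose proof (is_subgroup_core H D HD) as HN.
  pose proof (normal_core H D) as HNn.
  set (K := quot H N HN HNn).
  set (phi := quot_map H N : H -> K).
  assert (Hpre : forall S h y, In S l -> fin_index H S -> S h -> cyc (phi h) (phi y) -> S y).
  { intros S h y HS HSf Hh. apply (cyc_preim_sub H K phi); auto.
    - apply quot_map_hom.
    - intros z Hz. apply (quot_map_ker H N HN HNn), (core_sub H D) in Hz.
      apply Hz. auto. }
  exists K, phi.
  split; [apply quot_map_hom|]. split; [apply quot_map_surj|].
  split; [apply quot_finite, fin_index_core; assumption|]. split.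
  - intros [g Hg]. destruct (quot_map_surj H N g) as [h <-].
    destruct (Hfin h) as [S [HS [HSf Hh]]]. destruct (Hl S HS) as [_ [[x Hx] _]].
    apply Hx, (Hpre S h x); auto.
  - intros b _. destruct (quot_map_surj H N b) as [h <-].
    destruct (Hfin h) as [S [HS [HSf Hh]]].
    apply local_section_sub with S; [|apply Hl; exact HS].
    intros x. apply (Hpre S h x); assumption.
Qed.

Theorem theorem2p14 (G H : group) (f : G -> H) :
  is_hom f -> surjective f ->
  (good_quotient f -> sec_finite f) /\
  (abelian H -> sec_finite f -> good_quotient f).
Proof.
  intros _ _. split.
  - apply good_quotient_sec_finite.
  - intros _. apply sec_finite_good_quotient.
Qed.
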